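(* Let $\mathscr{A}\in\mathbb{R}^{n_1\times n_2\times n_3}$, $\mathscr{B}\in\mathbb{R}^{n_1\times s\times n_3}$, and suppose $k$ steps of the tensor tubal-global Golub–Kahan algorithm described in the context have been run (without breakdown). Then the tensors $\mathscr{V}_i$ and the tensors $\mathscr{U}_i$ produced are each T-orthonormal: $\langle\mathscr{V}_i,\mathscr{V}_j\rangle_T=\langle\mathscr{U}_i,\mathscr{U}_j\rangle_T=\mathbf{e}$ if $i=j$ and $=\mathbf{o}$ if $i\neq j$.
   Context: All tensors are real third-order arrays. $\widehat{\mathscr{A}}=\mathscr{A}\times_3F_{n_3}$ denotes the tensor obtained by applying the discrete Fourier transform ($F_{n_3}$ with entries $\omega^{(i-1)(j-1)}$, $\omega=e^{-2\pi\mathrm{i}/n_3}$) to each tube; its frontal slices $\hat A^{(k)}$ are the Fourier slices. T-product: $\mathscr{A}\star\mathscr{B}$ has Fourier slices $\hat A^{(k)}\hat B^{(k)}$. Transpose $\mathscr{A}^T$: transpose each frontal slice and reverse the order of frontal slices $2,\dots,n_3$. A tube is an element of $\mathbb{R}^{1\times1\times n_3}$; $\mathbf{e}$ has entries $(1,0,\dots,0)$, $\mathbf{o}$ is the zero tube. For a tube $\mathbf{a}$, $\mathbf{a}\divideontimes\mathscr{W}$ has $(i,j)$ tube $\mathbf{a}\star\mathscr{W}(i,j,:)$. T-trace: tube whose $k$-th Fourier slice is the trace of the $k$-th Fourier slice. Tubal inner product $\langle\mathscr{X},\mathscr{Y}\rangle_T=\text{T-trace}(\mathscr{X}^T\star\mathscr{Y})$.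 Normalization of $\mathscr{W}$: $\mathbf{a}$ is the tube with $k$-th Fourier coefficient $\|\hat W^{(k)}\|_F$ (breakdown if one is zero) and $\mathscr{Q}$ has Fourier slices $\hat W^{(k)}/\|\hat W^{(k)}\|_F$; output $[\mathscr{Q},\mathbf{a}]$. Tubal-global Golub–Kahan algorithm: $\mathscr{V}_0=0\in\mathbb{R}^{n_2\times s\times n_3}$, $[\mathscr{U}_1,\mathbf{a}_1]=\mathrm{Normalization}(\mathscr{B})$; for $j=1,\dots,k$: $\widetilde{\mathscr{V}}=\mathscr{A}^T\star\mathscr{U}_j-\mathbf{a}_j\divideontimes\mathscr{V}_{j-1}$, $[\mathscr{V}_j,\mathbf{b}_j]=\mathrm{Normalization}(\widetilde{\mathscr{V}})$, $\widetilde{\mathscr{U}}=\mathscr{A}\star\mathscr{V}_j-\mathbf{b}_j\divideontimes\mathscr{U}_j$, $[\mathscr{U}_{j+1},\mathbf{a}_{j+1}]=\mathrm{Normalization}(\widetilde{\mathscr{U}})$. *)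

From HB Require Import structures.
From mathcomp Require Import all_boot all_order all_algebra.
From mathcomp Require Import reals trigo.
From mathcomp Require Import complex.
Set Implicit Arguments. Unset Strict Implicit. Unset Printing Implicit Defensive.
Import Order.TTheory GRing.Theory Num.Theory.
Local Open Scope ring_scope.

Section Tensors.
Variable R : realType.
Local Notation C := (complex R).

(* A third-order array of size n1 x n2 x n3, given by its frontal slices
   A(:,:,k), k = 0..n3-1.  Entries are stored in C; "real" tensors are those
   whose entries have zero imaginary part (see [real_tensor]). *)
Definition tensor (n1 n2 n3 : nat) := 'I_n3 -> 'M[C]_(n1, n2).
Definition tube (n3 : nat) := tensor 1 1 n3.

Definition cre (z : C) : R := let: Complex a _ := z in a.
Definition cim (z : C) : R := let: Complex _ b := z in b.

Definition real_tensor n1 n2 n3 (A : tensor n1 n2 n3) : Prop :=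
  forall k i j, cim (A k i j) = 0.

Variable n3 : nat.

Definition omega : C :=
  Complex (cos (2 * pi / n3%:R)) (- sin (2 * pi / n3%:R)).

Definition fft n1 n2 (A : tensor n1 n2 n3) : tensor n1 n2 n3 :=
  fun k => \sum_(j < n3) (omega ^+ (k * j)) *: A j.

Definition ifft n1 n2 (Ah : tensor n1 n2 n3) : tensor n1 n2 n3 :=
  fun j => (n3%:R)^-1 *: \sum_(k < n3) (omega ^+ (k * j))^-1 *: Ah k.

Definition tprod n1 n2 n4 (A : tensor n1 n2 n3) (B : tensor n2 n4 n3)
  : tensor n1 n4 n3 :=
  ifft (fun k => fft A k *m fft B k).

(* index k |-> (n3 - k) mod n3 (0-based), reversing slices 2..n3 *)
Definition rev_idx (k : 'I_n3) : 'I_n3 :=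
  Ordinal (@ltn_pmod (n3 - k) n3 (leq_ltn_trans (leq0n k) (ltn_ord k))).

Definition ttrans n1 n2 (A : tensor n1 n2 n3) : tensor n2 n1 n3 :=
  fun k => (A (rev_idx k))^T.

Definition te : tube n3 := fun k => ((k == 0 :> nat)%:R)%:M.
Definition to : tube n3 := fun _ => 0.

Definition tube_of n1 n2 (W : tensor n1 n2 n3) i j : tube n3 :=
  fun k => (W k i j)%:M.

Definition tubemul n1 n2 (a : tube n3) (W : tensor n1 n2 n3) : tensor n1 n2 n3 :=
  fun k => \matrix_(i, j) (tprod a (tube_of W i j) k 0 0).

Definition ttrace n (A : tensor n n n3) : tube n3 :=
  ifft (fun k => (\tr (fft A k))%:M).

Definition tinner n1 n2 (X Y : tensor n1 n2 n3) : tube n3 :=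
  ttrace (tprod (ttrans X) Y).

Definition fnorm m n (M : 'M[C]_(m, n)) : C :=
  Complex (Num.sqrt (\sum_(i < m) \sum_(j < n) (cre (M i j) ^+ 2 + cim (M i j) ^+ 2))) 0.

Definition normalization n1 n2 (W : tensor n1 n2 n3) : tensor n1 n2 n3 * tube n3 :=
  (ifft (fun k => (fnorm (fft W k))^-1 *: fft W k),
   ifft (fun k => (fnorm (fft W k))%:M)).

Definition no_breakdown n1 n2 (W : tensor n1 n2 n3) : Prop :=
  forall k, fnorm (fft W k) != 0.

(* State of the tubal-global Golub--Kahan algorithm after step j:
   gkU = U_{j+1}, gka = a_{j+1}, gkV = V_j, gkb = b_j,
   gkVt = tilde V computed at step j, gkUt = tilde U computed at step j
   (for j = 0: V_0 = 0, and the "tilde U" to be normalized is B). *)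
Record gk_state n1 n2 s := GKState {
  gkU : tensor n1 s n3; gka : tube n3;
  gkV : tensor n2 s n3; gkb : tube n3;
  gkVt : tensor n2 s n3; gkUt : tensor n1 s n3 }.

Fixpoint golub_kahan n1 n2 s (A : tensor n1 n2 n3) (B : tensor n1 s n3)
  (j : nat) : gk_state n1 n2 s :=
  match j with
  | 0 => GKState (normalization B).1 (normalization B).2
                 (fun _ => 0) to (fun _ => 0) B
  | j'.+1 =>
    let st := golub_kahan A B j' in
    let Vt : tensor n2 s n3 :=
      fun k => tprod (ttrans A) (gkU st) k - tubemul (gka st) (gkV st) k in
    let Vb := normalization Vt in
    let Ut : tensor n1 s n3 :=
      fun k => tprod A Vb.1 k - tubemul Vb.2 (gkU st) k in
    let Ua := normalization Ut in
    GKState Ua.1 Ua.2 Vb.1 Vb.2 Vt Ut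
  end.

Definition gkU_ n1 n2 s (A : tensor n1 n2 n3) (B : tensor n1 s n3) (i : nat) :=
  gkU (golub_kahan A B i.-1).
Definition gkV_ n1 n2 s (A : tensor n1 n2 n3) (B : tensor n1 s n3) (i : nat) :=
  gkV (golub_kahan A B i).

Definition gk_no_breakdown n1 n2 s (A : tensor n1 n2 n3) (B : tensor n1 s n3)
  (k : nat) : Prop :=
  no_breakdown B /\
  forall j, (1 <= j <= k)%N ->
    no_breakdown (gkVt (golub_kahan A B j)) /\
    no_breakdown (gkUt (golub_kahan A B j)).

End Tensors.

From HB Require Import structures.
From mathcomp Require Import all_boot all_order all_algebra.
From mathcomp Require Import reals trigo.
From mathcomp Require Import complex.
From mathcomp Require Import zify ring lra.
Set Implicit Arguments. Unset Strict Implicit. Unset Printing Implicit Defensive.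
Import Order.TTheory GRing.Theory Num.Theory.
Local Open Scope ring_scope.

(* On every Fourier slice the algorithm is the classical global Golub-Kahan
   bidiagonalization of the complex matrix hat A^(k).  Indeed, the DFT along
   the tubes turns the T-product into the slicewise matrix product, the
   action of a tube into scaling by its Fourier coefficient, and, for real
   tensors, the transpose into the conjugate transpose (the reversal of the
   slices 2..n3 matches conj(omega^j) = omega^(n3-j)); hence the Fourier
   coefficients of <X, Y>_T are the Frobenius inner products tr(X^H Y) of the
   slices.  The normalizing coefficients are real, so the usual induction on
   the three-term recurrences, through <X, M Y> = <M^H X, Y>, shows that the
   slices of the V_i and of the U_i are orthonormal.  Since all Fourier
   coefficients of e are 1 and those of o are 0, the DFT being injective
   turns this into T-orthonormality. *)

Lemma ord_gt0 n (k : 'I_n) : (0 < n)%N.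
Proof. exact: leq_ltn_trans (leq0n k) (ltn_ord k). Qed.

Lemma sum_unity_root_expr (F : idomainType) n (z : F) : n.-unity_root z ->
  \sum_(j < n) z ^+ j = if z == 1 then n%:R else 0.
Proof.
case: eqP => [-> _|/eqP z_neq1 /unity_rootP zn1].
  by under eq_bigr do rewrite expr1n; rewrite sumr_const card_ord.
have /esym/eqP := subrX1 z n.
by rewrite zn1 subrr mulf_eq0 subr_eq0 (negbTE z_neq1) => /eqP.
Qed.

Section RootOfUnity.
Variable R : realType.
Local Notation C := (complex R).

Definition expNi (t : R) : C := Complex (cos t) (- sin t).

Lemma expNiD a b : expNi (a + b) = expNi a * expNi b.
Proof. by rewrite /expNi cosD sinD; simpc; congr Complex; ring. Qed.

Lemma expNiX t m : expNi t ^+ m = expNi (m%:R * t).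
Proof.
elim: m => [|m IH]; first by rewrite mul0r /expNi cos0 sin0 oppr0.
by rewrite exprS IH -expNiD mulrSr mulrDl mul1r addrC.
Qed.

Lemma expNi_mulconjc t : expNi t * conjc (expNi t) = 1.
Proof. by rewrite /expNi; simpc; congr Complex; rewrite -?(cos2Dsin2 t); ring. Qed.

Lemma expNi_neq1 t : 0 < t < pi *+ 2 -> expNi t != 1.
Proof.
move=> /andP[t_gt0 t_lt2pi]; apply/negP => /eqP [].
have -> : t = (t / 2) *+ 2 by rewrite -mulr_natr mulfVK // pnatr_eq0.
rewrite cos_mulr2n cos2sin2 => cos_eq1.
suff : 0 < sin (t / 2) by move: cos_eq1; nra.
apply: sin_gt0_pi; rewrite divr_gt0 //=.
by rewrite ltr_pdivrMr // mulr_natr.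
Qed.

Variable n : nat.
Local Notation w := (omega R n).

Lemma omega_prim : (0 < n)%N -> n.-primitive_root w.
Proof.
move=> n_gt0; rewrite /primitive_root_of_unity n_gt0; apply/forallP => i /=.
rewrite unity_rootE [w]/omega -/(expNi _) expNiX mulrCA.
case: (i.+1 =P n) => [->|i_neq_n].
  by rewrite mulfV ?pnatr_eq0 -?lt0n // mulr1 /expNi mulr_natl cos2pi sin2pi oppr0 eqxx.
apply/eqP/negbTE/expNi_neq1; rewrite !mulr_gt0 ?invr_gt0 ?ltr0n ?pi_gt0 //=.
rewrite mulrA ltr_pdivrMr ?ltr0n // -[pi *+ 2]mulr_natl ltr_pM2l ?mulr_gt0 ?pi_gt0 //.
by rewrite ltr_nat; have := ltn_ord i; lia.
Qed.

Lemma conjc_omegaX m : conjc (w ^+ m) = (w ^+ m)^-1.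
Proof.
have conjc_w : conjc w = w^-1 := esym (mulr1_eq (expNi_mulconjc _)).
by rewrite -exprVn -conjc_w; apply: rmorphXn.
Qed.

Section Ordinals.
Variables k l : 'I_n.
Let n_gt0 := ord_gt0 k.
Let w_prim := omega_prim n_gt0.

Lemma omega_inj : (w ^+ k == w ^+ l) = (k == l).
Proof. by rewrite (eq_prim_root_expr w_prim) !modn_small. Qed.

Lemma omega_rev j : w ^+ (rev_idx k * j) = (w ^+ (k * j))^-1.
Proof.
apply/esym/mulr1_eq; rewrite -exprD -mulnDl; apply/eqP.
by rewrite -(prim_order_dvd w_prim) dvdn_mulr //= /dvdn modnDmr subnKC ?modnn // ltnW.
Qed.

Lemma sum_omega : \sum_(j < n) w ^+ (k * j) / w ^+ (l * j) = (k == l)%:R * n%:R.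
Proof.
under eq_bigr do rewrite !exprM -exprVn -exprMn.
rewrite sum_unity_root_expr; last first.
  apply/unity_rootP; rewrite exprMn exprVn -!exprM !(mulnC _ n) !exprM.
  by rewrite (prim_expr_order w_prim) !expr1n invr1 mulr1.
have -> : (w ^+ k / w ^+ l == 1) = (k == l).
  rewrite -omega_inj; apply/eqP/eqP => [/divr1_eq //|->].
  by rewrite divff // expf_neq0 // (prim_root_eq0 w_prim) -lt0n.
by case: (k == l); rewrite ?mul1r ?mul0r.
Qed.

End Ordinals.
End RootOfUnity.

Reserved Notation "A ^H" (format "A ^H").
Local Notation mxconj := (map_mx conjc).
Local Notation "A ^H" := (trmx (mxconj A)) : ring_scope.

Section Fourier.
Variable R : realType.
Local Notation C := (complex R).
Variable n : nat.
Local Notation w := (omega R n).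

Lemma fft_ifft n1 n2 (F : tensor R n1 n2 n) k : fft (ifft F) k = F k.
Proof.
rewrite /fft /ifft.
under eq_bigr do rewrite scalerA scaler_sumr.
rewrite exchange_big /=.
under eq_bigr do
  [under eq_bigr do rewrite scalerA mulrAC; rewrite -scaler_suml -mulr_suml].
rewrite (bigD1 k) //= sum_omega eqxx mul1r mulfV ?scale1r; last first.
  by rewrite pnatr_eq0 -lt0n (ord_gt0 k).
rewrite big1 ?addr0 // => l l_neq_k.
by rewrite sum_omega eq_sym (negbTE l_neq_k) !mul0r scale0r.
Qed.

Lemma ifft_fft n1 n2 (X : tensor R n1 n2 n) j : ifft (fft X) j = X j.
Proof.
rewrite /fft /ifft.
under eq_bigr do rewrite scaler_sumr.
rewrite exchange_big /=.
under eq_bigr => l _ do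
  [under eq_bigr => k _ do rewrite scalerA mulrC (mulnC k j) (mulnC k l);
   rewrite -scaler_suml].
rewrite scaler_sumr (bigD1 j) //= sum_omega eqxx mul1r scalerA mulVf ?scale1r;
  last first.
  by rewrite pnatr_eq0 -lt0n (ord_gt0 j).
rewrite big1 ?addr0 // => l l_neq_j.
by rewrite sum_omega (negbTE l_neq_j) !mul0r scale0r scaler0.
Qed.

Lemma fft_inj n1 n2 (X Y : tensor R n1 n2 n) : fft X =1 fft Y -> X =1 Y.
Proof.
move=> eq_fft j; rewrite -ifft_fft -[Y j]ifft_fft /ifft.
by congr (_ *: _); apply: eq_bigr => k _; rewrite eq_fft.
Qed.

Lemma fft_entry n1 n2 (X : tensor R n1 n2 n) k a b :
  fft X k a b = \sum_(j < n) w ^+ (k * j) * X j a b.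
Proof. by rewrite /fft summxE; apply: eq_bigr => j _; rewrite mxE. Qed.

Lemma fft0 n1 n2 (k : 'I_n) : fft (fun _ : 'I_n => 0 : 'M[C]_(n1, n2)) k = 0.
Proof. by rewrite /fft big1 // => j _; rewrite scaler0. Qed.

Lemma fftB n1 n2 (X Y : tensor R n1 n2 n) k :
  fft (fun j => X j - Y j) k = fft X k - fft Y k.
Proof. by rewrite /fft -sumrB; apply: eq_bigr => j _; rewrite scalerBr. Qed.

Lemma fft_tprod n1 n2 n4 (X : tensor R n1 n2 n) (Y : tensor R n2 n4 n) k :
  fft (tprod X Y) k = fft X k *m fft Y k.
Proof. exact: fft_ifft. Qed.

Lemma fft_tubemul n1 n2 (a : tube R n) (W : tensor R n1 n2 n) k :
  fft (tubemul a W) k = fft a k 0 0 *: fft W k.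
Proof.
apply/matrixP => i l; rewrite fft_entry mxE.
under eq_bigr do rewrite mxE.
rewrite -[X in X = _](fft_entry (tprod a (tube_of W i l)) k 0 0) fft_tprod mxE big_ord1.
by congr (_ * _); rewrite !fft_entry; apply: eq_bigr => j _; rewrite mxE.
Qed.

Lemma fft_te k : fft (@te R n) k = 1%:M.
Proof.
have n_gt0 := ord_gt0 k.
rewrite /fft (bigD1 (Ordinal n_gt0)) //= muln0 expr0 scale1r big1 ?addr0 // => j.
by case: j => [[|j] ?] // _; rewrite /te /= mulr0n raddf0 scaler0.
Qed.

Lemma fft_normalization n1 n2 (W : tensor R n1 n2 n) k :
  fft (normalization W).1 k = (fnorm (fft W k))^-1 *: fft W k /\
  fft (normalization W).2 k 0 0 = fnorm (fft W k).
Proof. by split; rewrite fft_ifft // mxE. Qed.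

Lemma rev_idxK : involutive (@rev_idx n).
Proof.
move=> k; apply: val_inj => /=.
have [->|k_gt0] := posnP k; first by rewrite subn0 modnn subn0 modnn.
have -> : ((n - k) %% n = n - k)%N.
  by rewrite modn_small // ltn_subrL k_gt0 (ord_gt0 k).
by rewrite subKn ?modn_small // ltnW.
Qed.

Lemma fft_ttrans_rev n1 n2 (X : tensor R n1 n2 n) k :
  fft (ttrans X) k = (fft X (rev_idx k))^T.
Proof.
rewrite /fft /ttrans (reindex_inj (can_inj rev_idxK)) linear_sum.
apply: eq_bigr => j _; rewrite rev_idxK mulnC omega_rev (mulnC j) -omega_rev.
by rewrite linearZ.
Qed.

Lemma conjc_idP (z : C) : reflect (conjc z = z) (cim z == 0).
Proof. by case: z => a b /=; apply: (iffP eqP) => [->|[]]; rewrite ?oppr0 //; lra. Qed.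

Lemma real_fft n1 n2 (X : tensor R n1 n2 n) k :
  real_tensor X -> fft X (rev_idx k) = mxconj (fft X k).
Proof.
move=> realX; apply/matrixP => a b; rewrite mxE !fft_entry rmorph_sum.
apply: eq_bigr => j _; rewrite rmorphM /= omega_rev conjc_omegaX.
by rewrite (conjc_idP _ _) ?realX.
Qed.

Lemma real_ifft n1 n2 (F : tensor R n1 n2 n) :
  (forall k, F (rev_idx k) = mxconj (F k)) -> real_tensor (ifft F).
Proof.
move=> F_rev j a b; apply/eqP/conjc_idP.
rewrite /ifft !mxE summxE rmorphM /= conjc_inv conjc_nat rmorph_sum.
congr (_ * _); rewrite (reindex_inj (can_inj rev_idxK)) /=.
apply: eq_bigr => k _; rewrite !mxE rmorphM /= conjc_inv conjc_omegaX invrK.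
by rewrite F_rev mxE conjcK omega_rev.
Qed.

Lemma fft_ttrans n1 n2 (X : tensor R n1 n2 n) k :
  real_tensor X -> fft (ttrans X) k = (fft X k)^H.
Proof. by move=> realX; rewrite fft_ttrans_rev real_fft. Qed.

End Fourier.

Section FrobeniusInnerProduct.
Variable R : realType.
Local Notation C := (complex R).

Definition fdot m1 m2 (X Y : 'M[C]_(m1, m2)) : C := \tr (X^H *m Y).

Lemma ctrmxK m1 m2 (X : 'M[C]_(m1, m2)) : X^H^H = X.
Proof. by apply/matrixP => i j; rewrite !mxE conjcK. Qed.

Lemma ctrmx_mul m1 m2 m3 (X : 'M[C]_(m1, m2)) (Y : 'M[C]_(m2, m3)) :
  (X *m Y)^H = Y^H *m X^H.
Proof. by rewrite map_mxM trmx_mul. Qed.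

Lemma mxconjZ m1 m2 c (X : 'M[C]_(m1, m2)) : mxconj (c *: X) = conjc c *: mxconj X.
Proof. exact: map_mxZ. Qed.

Lemma conjc_fnorm m1 m2 (X : 'M[C]_(m1, m2)) : conjc (fnorm X) = fnorm X.
Proof. by rewrite /fnorm /= oppr0. Qed.

Lemma fnorm_mxconj m1 m2 (X : 'M[C]_(m1, m2)) : fnorm (mxconj X) = fnorm X.
Proof.
rewrite /fnorm; congr (Complex (Num.sqrt _) 0); apply: eq_bigr => i _.
by apply: eq_bigr => j _; rewrite mxE; case: (X i j) => a b /=; rewrite sqrrN.
Qed.

Variables m1 m2 : nat.
Implicit Types X Y Z : 'M[C]_(m1, m2).

Lemma fdotE X Y : fdot X Y = \sum_(i < m2) \sum_(l < m1) conjc (X l i) * Y l i.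
Proof.
by apply: eq_bigr => i _; rewrite mxE; apply: eq_bigr => l _; rewrite !mxE.
Qed.

Lemma fdotC X Y : fdot Y X = conjc (fdot X Y).
Proof.
rewrite !fdotE rmorph_sum; apply: eq_bigr => i _; rewrite rmorph_sum.
by apply: eq_bigr => l _; rewrite rmorphM /= conjcK mulrC.
Qed.

Lemma fdotZl c X Y : fdot (c *: X) Y = conjc c * fdot X Y.
Proof. by rewrite /fdot map_mxZ linearZ -scalemxAl mxtraceZ. Qed.

Lemma fdotZr c X Y : fdot X (c *: Y) = c * fdot X Y.
Proof. by rewrite /fdot -scalemxAr mxtraceZ. Qed.

Lemma fdotDl X Y Z : fdot (X + Y) Z = fdot X Z + fdot Y Z.
Proof. by rewrite /fdot map_mxD linearD mulmxDl mxtraceD. Qed.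

Lemma fdotBr X Y Z : fdot X (Y - Z) = fdot X Y - fdot X Z.
Proof. by rewrite /fdot mulmxBr linearB. Qed.

Lemma fdot0l Y : fdot 0 Y = 0.
Proof. by rewrite /fdot map_mx0 trmx0 mul0mx linear0. Qed.

Lemma fdot_adj p (M : 'M[C]_(p, m1)) (X : 'M[C]_(p, m2)) Y :
  fdot X (M *m Y) = fdot (M^H *m X) Y.
Proof. by rewrite /fdot ctrmx_mul ctrmxK mulmxA. Qed.

Lemma fdot_self X : fdot X X = fnorm X * fnorm X.
Proof.
have sum_ge0 : 0 <= \sum_(i < m1) \sum_(j < m2) (cre (X i j) ^+ 2 + cim (X i j) ^+ 2).
  by apply: sumr_ge0 => i _; apply: sumr_ge0 => j _; rewrite addr_ge0 ?sqr_ge0.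
have Complex_sum p (F : 'I_p -> R) : Complex (\sum_i F i) 0 = \sum_i Complex (F i) 0.
  by apply: (big_morph (fun x => Complex x 0)) => [x y|] //=; simpc.
rewrite /fnorm; simpc; rewrite -expr2 sqr_sqrtr // fdotE exchange_big /= Complex_sum.
apply: eq_bigr => i _; rewrite Complex_sum; apply: eq_bigr => j _.
by case: (X i j) => x y /=; simpc; congr Complex; ring.
Qed.

Lemma fdot_normalize X : fnorm X != 0 ->
  fdot ((fnorm X)^-1 *: X) ((fnorm X)^-1 *: X) = 1.
Proof.
by move=> X_neq0; rewrite fdotZl fdotZr fdot_self conjc_inv conjc_fnorm; field.
Qed.

End FrobeniusInnerProduct.

Section GolubKahanRecurrence.
Variable R : realType.
Local Notation C := (complex R).
Variables (m1 m2 s K : nat) (M : 'M[C]_(m1, m2)).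
Variables (u : nat -> 'M[C]_(m1, s)) (v : nat -> 'M[C]_(m2, s)) (a b : nat -> C).
Hypothesis v0 : v 0 = 0.
Hypothesis fdot_u0 : fdot (u 0) (u 0) = 1.
Hypothesis conjc_a : forall j, conjc (a j) = a j.
Hypothesis conjc_b : forall j, conjc (b j) = b j.
Hypothesis v_rec : forall j, (j < K)%N -> b j.+1 *: v j.+1 = M^H *m u j - a j *: v j.
Hypothesis u_rec : forall j, (j < K)%N -> a j.+1 *: u j.+1 = M *m v j.+1 - b j.+1 *: u j.
Hypothesis fdot_v : forall j, (j < K)%N -> fdot (v j.+1) (v j.+1) = 1.
Hypothesis fdot_u : forall j, (j < K)%N -> fdot (u j.+1) (u j.+1) = 1.
Hypothesis b_neq0 : forall j, (j < K)%N -> b j.+1 != 0.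
Hypothesis a_neq0 : forall j, (j < K)%N -> a j.+1 != 0.

Let orthonormal_upto j := forall i l, (i <= j)%N -> (l <= j)%N ->
  fdot (u i) (u l) = (i == l)%:R /\ fdot (v i) (v l) = ((i == l) && (0 < i)%N)%:R.

Lemma fdot_v_next j : (j < K)%N -> orthonormal_upto j ->
  forall i, (i <= j)%N -> fdot (v i) (v j.+1) = 0.
Proof.
move=> j_lt_K orth [|i] i_le_j; first by rewrite v0 fdot0l.
apply/eqP; rewrite -(mulIr_eq0 _ (mulIf (b_neq0 j_lt_K))) mulrC -fdotZr v_rec //.
have Mv : M *m v i.+1 = a i.+1 *: u i.+1 + b i.+1 *: u i.
  by rewrite u_rec ?subrK // (ltn_trans i_le_j j_lt_K).
rewrite fdotBr fdotZr fdot_adj ctrmxK Mv fdotDl !fdotZl conjc_a conjc_b.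
have [u_ii _] := orth i.+1 j i_le_j (leqnn j).
have [u_ij v_ij] := orth i j (ltnW i_le_j) (leqnn j).
have [_ v_i1j] := orth i.+1 j i_le_j (leqnn j).
rewrite u_ii u_ij v_i1j /= andbT (ltn_eqF i_le_j) mulr0 addr0.
by case: (i.+1 =P j) => [<-|_]; rewrite ?mulr0 subrr.
Qed.

Lemma fdot_u_next j : (j < K)%N -> orthonormal_upto j ->
  forall i, (i <= j)%N -> fdot (u i) (u j.+1) = 0.
Proof.
move=> j_lt_K orth i i_le_j.
apply/eqP; rewrite -(mulIr_eq0 _ (mulIf (a_neq0 j_lt_K))) mulrC -fdotZr u_rec //.
have MHu : M^H *m u i = b i.+1 *: v i.+1 + a i *: v i.
  by rewrite v_rec ?subrK // (leq_ltn_trans i_le_j j_lt_K).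
rewrite fdotBr fdotZr fdot_adj MHu fdotDl !fdotZl conjc_a conjc_b.
rewrite (fdot_v_next j_lt_K orth i_le_j) mulr0 addr0.
have [u_ij _] := orth i j i_le_j (leqnn j); rewrite u_ij.
case: (i =P j) => [->|/eqP i_neq_j]; first by rewrite fdot_v // !mulr1 subrr.
by rewrite fdot_v_next ?mulr0 ?subrr // ltn_neqAle i_neq_j.
Qed.

Lemma golub_kahan_orthonormal : orthonormal_upto K.
Proof.
suff : forall j, (j <= K)%N -> orthonormal_upto j by apply.
elim=> [_ [|?] [|?] //|j IH j_lt_K]; first by rewrite fdot_u0 v0 fdot0l.
have {}IH := IH (ltnW j_lt_K).
move=> i l; rewrite leq_eqVlt ltnS => /predU1P[->|i_le];
  rewrite leq_eqVlt ltnS => /predU1P[->|l_le].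
- by rewrite eqxx fdot_u // fdot_v.
- rewrite fdotC fdot_u_next // fdotC fdot_v_next // rmorph0.
  by rewrite gtn_eqF.
- by rewrite fdot_u_next // fdot_v_next // ltn_eqF.
- exact: IH.
Qed.

End GolubKahanRecurrence.

Section FourierNormalization.
Variables (R : realType) (n n1 n2 : nat) (W : tensor R n1 n2 n) (k : 'I_n).
Local Notation Q := (normalization W).1.
Local Notation q := (normalization W).2.

Lemma conjc_fft_normalization : conjc (fft q k 0 0) = fft q k 0 0.
Proof. by rewrite (fft_normalization W k).2 conjc_fnorm. Qed.

Hypothesis W_neq0 : fnorm (fft W k) != 0.

Lemma fft_normalization_neq0 : fft q k 0 0 != 0.
Proof. by rewrite (fft_normalization W k).2. Qed.

Lemma fft_normalizationK : fft q k 0 0 *: fft Q k = fft W k.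
Proof.
have [-> ->] := fft_normalization W k.
by rewrite scalerA mulfV ?scale1r.
Qed.

Lemma fdot_fft_normalization : fdot (fft Q k) (fft Q k) = 1.
Proof. by rewrite (fft_normalization W k).1 fdot_normalize. Qed.

End FourierNormalization.

Section RealTensors.
Variables (R : realType) (n : nat).
Local Notation C := (complex R).

Lemma real_tprod n1 n2 n4 (X : tensor R n1 n2 n) (Y : tensor R n2 n4 n) :
  real_tensor X -> real_tensor Y -> real_tensor (tprod X Y).
Proof.
by move=> realX realY; apply: real_ifft => k; rewrite !real_fft // map_mxM.
Qed.

Lemma real_ttrans n1 n2 (X : tensor R n1 n2 n) :
  real_tensor X -> real_tensor (ttrans X).
Proof. by move=> realX k i j; rewrite mxE. Qed.

Lemma real_tensorB n1 n2 (X Y : tensor R n1 n2 n) :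
  real_tensor X -> real_tensor Y -> real_tensor (fun k => X k - Y k).
Proof.
move=> realX realY k i j; rewrite !mxE.
case: (X k i j) (realX k i j) (realY k i j) => ? ? /= ->.
by case: (Y k i j) => ? ? /= ->; rewrite subrr.
Qed.

Lemma real_tubemul n1 n2 (a : tube R n) (W : tensor R n1 n2 n) :
  real_tensor a -> real_tensor W -> real_tensor (tubemul a W).
Proof.
move=> reala realW k i j; rewrite mxE; apply: real_tprod => // l x y.
by rewrite !ord1 mxE /= mulr1n realW.
Qed.

Lemma real_normalization n1 n2 (W : tensor R n1 n2 n) : real_tensor W ->
  real_tensor (normalization W).1 /\ real_tensor (normalization W).2.
Proof.
move=> realW; split; apply: real_ifft => k; rewrite real_fft // fnorm_mxconj.
  by rewrite mxconjZ conjc_inv conjc_fnorm.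
apply/matrixP => i j; rewrite !mxE rmorphMn.
by congr (_ *+ _); exact/esym/conjc_fnorm.
Qed.

Lemma real_tensor0 n1 n2 : real_tensor (fun _ : 'I_n => 0 : 'M[C]_(n1, n2)).
Proof. by move=> k i j; rewrite mxE. Qed.

Lemma tinner_delta n1 n2 (X Y : tensor R n1 n2 n) (b : bool) : real_tensor X ->
  (forall k, fdot (fft X k) (fft Y k) = b%:R) ->
  tinner X Y =1 (if b then @te R n else @to R n).
Proof.
move=> realX fdotXY; apply: fft_inj => k.
rewrite /tinner /ttrace fft_ifft fft_tprod fft_ttrans // -/(fdot _ _) fdotXY.
by case: b {fdotXY}; rewrite ?fft_te ?fft0 //= mulr0n raddf0.
Qed.

End RealTensors.

Section GolubKahanTensor.
Variables (R : realType) (n1 n2 n3 s : nat).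
Variables (A : tensor R n1 n2 n3) (B : tensor R n1 s n3).
Hypotheses (realA : real_tensor A) (realB : real_tensor B).
Local Notation gk := (golub_kahan A B).

Lemma real_golub_kahan j :
  [/\ real_tensor (gkU (gk j)), real_tensor (gka (gk j)),
      real_tensor (gkV (gk j)) & real_tensor (gkb (gk j))].
Proof.
elim: j => [|j [realU reala realV realb]].
  by have [? ?] := real_normalization realB; split => //; apply: real_tensor0.
have realVt : real_tensor (gkVt (gk j.+1)).
  apply: real_tensorB; last exact: real_tubemul.
  by apply: real_tprod; first exact: real_ttrans.
have [realV' realb'] := real_normalization realVt.
have realUt : real_tensor (gkUt (gk j.+1)).
  by apply: real_tensorB; [exact: real_tprod | exact: real_tubemul].
by have [? ?] := real_normalization realUt; split.
Qed.

Variable k : 'I_n3.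

Lemma fft_gkVt j : fft (gkVt (gk j.+1)) k =
  (fft A k)^H *m fft (gkU (gk j)) k
  - fft (gka (gk j)) k 0 0 *: fft (gkV (gk j)) k.
Proof. by rewrite fftB fft_tprod fft_ttrans // fft_tubemul. Qed.

Lemma fft_gkUt j : fft (gkUt (gk j.+1)) k =
  fft A k *m fft (gkV (gk j.+1)) k
  - fft (gkb (gk j.+1)) k 0 0 *: fft (gkU (gk j)) k.
Proof. by rewrite fftB fft_tprod fft_tubemul. Qed.

Lemma golub_kahan_fft_orthonormal K : gk_no_breakdown A B K ->
  forall i l, (i <= K)%N -> (l <= K)%N ->
  fdot (fft (gkU (gk i)) k) (fft (gkU (gk l)) k) = (i == l)%:R /\
  fdot (fft (gkV (gk i)) k) (fft (gkV (gk l)) k) = ((i == l) && (0 < i)%N)%:R.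
Proof.
move=> [no_bd_B no_bd] i l i_le l_le.
have no_bd_Vt j : (j < K)%N -> fnorm (fft (gkVt (gk j.+1)) k) != 0.
  by move=> j_lt_K; apply: (no_bd j.+1 j_lt_K).1.
have no_bd_Ut j : (j < K)%N -> fnorm (fft (gkUt (gk j.+1)) k) != 0.
  by move=> j_lt_K; apply: (no_bd j.+1 j_lt_K).2.
apply: (@golub_kahan_orthonormal R n1 n2 s K (fft A k)
  (fun j => fft (gkU (gk j)) k) (fun j => fft (gkV (gk j)) k)
  (fun j => fft (gka (gk j)) k 0 0) (fun j => fft (gkb (gk j)) k 0 0)) => //=.
- exact: fft0.
- exact: fdot_fft_normalization.
- by case=> [|j]; apply: conjc_fft_normalization.
- by case=> [|j]; [rewrite fft0 mxE rmorph0 | apply: conjc_fft_normalization].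
- by move=> j j_lt_K; rewrite -fft_gkVt; apply: fft_normalizationK; apply: no_bd_Vt.
- by move=> j j_lt_K; rewrite -fft_gkUt; apply: fft_normalizationK; apply: no_bd_Ut.
- by move=> j j_lt_K; apply: fdot_fft_normalization; apply: no_bd_Vt.
- by move=> j j_lt_K; apply: fdot_fft_normalization; apply: no_bd_Ut.
- by move=> j j_lt_K; apply: fft_normalization_neq0; apply: no_bd_Vt.
- by move=> j j_lt_K; apply: fft_normalization_neq0; apply: no_bd_Ut.
Qed.

End GolubKahanTensor.

Unset Implicit Arguments.

Theorem proposition12 (R : realType) (n1 n2 n3 s k : nat)
  (A : tensor R n1 n2 n3) (B : tensor R n1 s n3) :
  real_tensor A -> real_tensor B ->
  gk_no_breakdown A B k ->
  (forall i j, (1 <= i <= k)%N -> (1 <= j <= k)%N ->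
     tinner (gkV_ A B i) (gkV_ A B j) =1
       (if i == j then @te R n3 else @to R n3)) /\
  (forall i j, (1 <= i <= k.+1)%N -> (1 <= j <= k.+1)%N ->
     tinner (gkU_ A B i) (gkU_ A B j) =1
       (if i == j then @te R n3 else @to R n3)).
Proof.
move=> realA realB no_bd; split.
- move=> i j /andP[i_gt0 i_le] /andP[_ j_le]; apply: tinner_delta.
    by have [] := real_golub_kahan realA realB i.
  move=> x; have [_ ->] := golub_kahan_fft_orthonormal realA x no_bd i_le j_le.
  by rewrite i_gt0 andbT.
- move=> [|i] [|j] // /andP[_ i_le] /andP[_ j_le]; apply: tinner_delta.
    by have [] := real_golub_kahan realA realB i.
  by move=> x; have [-> _] := golub_kahan_fft_orthonormal realA x no_bd i_le j_le.
Qed.
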